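(* Let $\mathcal{A}$ be a Banach algebra and $X$ a Banach $\mathcal{A}$-bimodule with left module action $\pi_\ell:\mathcal{A}\times X\to X$. Suppose that $X^*$ factors on the left with respect to $\mathcal{A}$, i.e. every $x'\in X^*$ can be written as $x'=y'a$ for some $y'\in X^*$ and $a\in\mathcal{A}$. If $a\cdot a''\in Z_1(\pi_\ell)$ for all $a\in\mathcal{A}$ and $a''\in\mathcal{A}^{**}$, then $Z_1(\pi_\ell)=\mathcal{A}^{**}$.
   Context: For $x'\in X^*$ and $a\in\mathcal{A}$, $x'a\in X^*$ is defined by $\langle x'a,x\rangle=\langle x',\pi_\ell(a,x)\rangle$. For a bounded bilinear map $m:X_1\times Y\to Z$ between Banach spaces, define $m^*:Z^*\times X_1\to Y^*$ by $\langle m^*(z',x),y\rangle=\langle z',m(x,y)\rangle$, $m^{**}:Y^{**}\times Z^*\to X_1^*$ by $\langle m^{**}(y'',z'),x\rangle=\langle y'',m^*(z',x)\rangle$, and $m^{***}:X_1^{**}\times Y^{**}\to Z^{**}$ by $\langle m^{***}(x'',y''),z'\rangle=\langle x'',m^{**}(y'',z')\rangle$. The first topological center of $\pi_\ell$ is $Z_1(\pi_\ell)=\{a''\in\mathcal{A}^{**}: x''\mapsto\pi_\ell^{***}(a'',x'')\text{ is weak}^*\text{-to-weak}^*\text{ continuous on }X^{**}\}$. $\mathcal{A}^{**}$ carries the first Arens product: for $a,b\in\mathcal{A}$, $a'\in\mathcal{A}^*$, $a'',b''\in\mathcal{A}^{**}$, $\langle a'a,b\rangle=\langle a',ab\rangle$,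 $\langle b''a',a\rangle=\langle b'',a'a\rangle$, $\langle a''\cdot b'',a'\rangle=\langle a'',b''a'\rangle$; $\mathcal{A}$ is embedded canonically in $\mathcal{A}^{**}$. *)

From HB Require Import structures.
From mathcomp Require Import all_boot all_order all_algebra.
From mathcomp Require Import all_classical all_reals.
From mathcomp Require Import topology normedtype.
Set Implicit Arguments. Unset Strict Implicit. Unset Printing Implicit Defensive.
Import Order.TTheory GRing.Theory Num.Theory.
Import numFieldNormedType.Exports.
Local Open Scope ring_scope.

Section Banach.
Variable K : numFieldType.

Definition is_dual (V : normedModType K) (f : V -> K) : Prop :=
  (forall (k : K) (u v : V), f (k *: u + v) = k * f u + f v) /\
  (exists C : K, forall v : V, `|f v| <= C * `|v|).

(* M is an admissible bound for f, i.e. ||f|| <= M (||f|| is the inf of them) *)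
Definition dual_bound (V : normedModType K) (f : V -> K) (M : K) : Prop :=
  forall v : V, `|f v| <= M * `|v|.

(* x'' in V^** : a bounded linear functional on V^* (with its dual norm);
   values of phi outside V^* are irrelevant *)
Definition is_bidual (V : normedModType K) (phi : (V -> K) -> K) : Prop :=
  (forall (k : K) (f g : V -> K), is_dual f -> is_dual g ->
      phi (fun v => k * f v + g v) = k * phi f + phi g) /\
  (exists C : K, forall f : V -> K, is_dual f ->
      forall M : K, dual_bound f M -> `|phi f| <= C * M).

Section Transposes.
Variables (X1 Y Z : normedModType K) (m : X1 -> Y -> Z).

Definition mstar (z' : Z -> K) (x : X1) : Y -> K := fun y => z' (m x y).
Definition m2star (y'' : (Y -> K) -> K) (z' : Z -> K) : X1 -> K :=
  fun x => y'' (mstar z' x).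
Definition m3star (x'' : (X1 -> K) -> K) (y'' : (Y -> K) -> K) : (Z -> K) -> K :=
  fun z' => x'' (m2star y'' z').
End Transposes.

(* Continuity at every point of V^** for the weak* topologies, written with
   the standard basic weak* neighbourhoods
   {x'' : |<x'' - x0'', f_i>| < d, i < n}, f_i in V^*. *)
Definition weakstar_continuous (V W : normedModType K)
    (T : ((V -> K) -> K) -> ((W -> K) -> K)) : Prop :=
  forall x0 : (V -> K) -> K, is_bidual x0 ->
  forall w' : W -> K, is_dual w' ->
  forall e : K, 0 < e ->
  exists (n : nat) (F : 'I_n -> V -> K) (d : K),
    (forall i, is_dual (F i)) /\ 0 < d /\
    forall x : (V -> K) -> K, is_bidual x ->
      (forall i, `|x (F i) - x0 (F i)| < d) ->
      `|T x w' - T x0 w'| < e.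

Definition banach_algebra (A : completeNormedModType K) (mul : A -> A -> A) : Prop :=
  ((forall (k : K) (a b c : A), mul (k *: a + b) c = k *: mul a c + mul b c) /\
      (forall (k : K) (a b c : A), mul a (k *: b + c) = k *: mul a b + mul a c) /\
      (forall a b c : A, mul a (mul b c) = mul (mul a b) c) /\
      (forall a b : A, `|mul a b| <= `|a| * `|b|)).

Definition banach_bimodule (A : completeNormedModType K) (mul : A -> A -> A)
    (X : completeNormedModType K) (pl : A -> X -> X) (pr : X -> A -> X) : Prop :=
  ((forall (k : K) (a b : A) (x : X), pl (k *: a + b) x = k *: pl a x + pl b x) /\
      (forall (k : K) (a : A) (x y : X), pl a (k *: x + y) = k *: pl a x + pl a y) /\
      (forall (k : K) (a b : A) (x : X), pr x (k *: a + b) = k *: pr x a + pr x b) /\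
      (forall (k : K) (a : A) (x y : X), pr (k *: x + y) a = k *: pr x a + pr y a) /\
      (forall (a : A) (x : X), `|pl a x| <= `|a| * `|x|) /\
      (forall (a : A) (x : X), `|pr x a| <= `|x| * `|a|) /\
      (forall (a b : A) (x : X), pl a (pl b x) = pl (mul a b) x) /\
      (forall (a b : A) (x : X), pr (pr x a) b = pr x (mul a b)) /\
      (forall (a b : A) (x : X), pr (pl a x) b = pl a (pr x b))).

Definition dual_ract (A X : normedModType K) (pl : A -> X -> X)
    (x' : X -> K) (a : A) : X -> K := fun x => x' (pl a x).

Definition factors_left (A X : normedModType K) (pl : A -> X -> X) : Prop :=
  forall x' : X -> K, is_dual x' ->
    exists (y' : X -> K) (a : A), is_dual y' /\ x' = dual_ract pl y' a.

Definition Z1 (A X : normedModType K) (pl : A -> X -> X)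
    (a'' : (A -> K) -> K) : Prop :=
  weakstar_continuous (fun x'' : (X -> K) -> K => m3star pl a'' x'').

Section Arens.
Variables (A : normedModType K) (mul : A -> A -> A).
Definition arens_fa (a' : A -> K) (a : A) : A -> K := fun b => a' (mul a b).
Definition arens_bf (b'' : (A -> K) -> K) (a' : A -> K) : A -> K :=
  fun a => b'' (arens_fa a' a).
Definition arens (a'' b'' : (A -> K) -> K) : (A -> K) -> K :=
  fun a' => a'' (arens_bf b'' a').
Definition can_emb (a : A) : (A -> K) -> K := fun a' => a' a.
End Arens.

End Banach.

From HB Require Import structures.
From mathcomp Require Import all_boot all_order all_algebra.
From mathcomp Require Import all_classical all_reals.
From mathcomp Require Import topology normedtype.
Import Order.TTheory GRing.Theory Num.Theory.
Import numFieldNormedType.Exports.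
Local Open Scope ring_scope.

(* For a factorisation x' = y' b, associativity of the module action gives
   <pi_l^***(a'', x''), y' b> = <pi_l^***(b . a'', x''), y'> for every x''.
   So the map x'' |-> <pi_l^***(a'', x''), x'> is the map
   x'' |-> <pi_l^***(b . a'', x''), y'>, which is weak* continuous because
   b . a'' lies in Z_1(pi_l). *)

Section ArensModule.
Variables (K : numFieldType) (A X : normedModType K).
Variables (mul : A -> A -> A) (pl : A -> X -> X).
Hypothesis plM : forall (a b : A) (x : X), pl a (pl b x) = pl (mul a b) x.

Lemma m3star_dual_ract (a'' : (A -> K) -> K) (x'' : (X -> K) -> K)
    (y' : X -> K) (b : A) :
  m3star pl a'' x'' (dual_ract pl y' b) =
  m3star pl (arens mul (can_emb b) a'') x'' y'.
Proof.
rewrite /m3star /m2star /arens /arens_bf /arens_fa /can_emb /mstar /dual_ract.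
congr a''; apply: boolp.funext => c; congr x''; apply: boolp.funext => x.
by rewrite plM.
Qed.

End ArensModule.

Lemma weakstar_continuous_transfer (K : numFieldType) (V W : normedModType K)
    (T : ((V -> K) -> K) -> ((W -> K) -> K)) :
  (forall w' : W -> K, is_dual w' ->
     exists (S : ((V -> K) -> K) -> ((W -> K) -> K)) (y' : W -> K),
       [/\ weakstar_continuous S, is_dual y' & forall x, T x w' = S x y']) ->
  weakstar_continuous T.
Proof.
move=> hT x0 hx0 w' hw' e he.
have [S [y' [contS hy' eTS]]] := hT w' hw'.
have [n [F [d [hF [hd hS]]]]] := contS x0 hx0 y' hy' e he.
exists n, F, d; split => //; split => // x hx hxd.
by rewrite !eTS; exact: hS.
Qed.

Theorem theorem2p1 (K : numFieldType) (A : completeNormedModType K)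
  (mul : A -> A -> A) (X : completeNormedModType K)
  (pl : A -> X -> X) (pr : X -> A -> X) :
  banach_algebra mul ->
  banach_bimodule mul pl pr ->
  factors_left pl ->
  (forall (a : A) (a'' : (A -> K) -> K), is_bidual a'' ->
      Z1 pl (arens mul (can_emb a) a'')) ->
  forall a'' : (A -> K) -> K, is_bidual a'' -> Z1 pl a''.
Proof.
move=> _ [_ [_ [_ [_ [_ [_ [plM _]]]]]]] fac hZ1 a'' ha''.
apply: weakstar_continuous_transfer => w' hw'.
have [y' [b [hy' ->]]] := fac w' hw'.
exists (m3star pl (arens mul (can_emb b) a'')), y'; split => //.
- exact: hZ1.
- by move=> x''; apply: m3star_dual_ract.
Qed.
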